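(* Consider the four-oscillator system below with $A=-1$ (so $K_\mathrm{s}=0$, $K_\mathrm{n}=1$) and $\alpha_\mathrm{s}=\alpha_\mathrm{n}=0$. Then the function $$H^{(-1,0)}(\psi_1,\psi_3)=\cot\!\left(\frac{\psi_1+\psi_3}{4}\right)\tan\!\left(\frac{\psi_1-\psi_3}{4}\right)$$ (with $\psi_1,\psi_3$ the real-valued phase differences of a solution) is constant along every solution on any time interval on which it is defined (i.e. on which $(\psi_1+\psi_3)/4\notin\pi\mathbb{Z}$ and $(\psi_1-\psi_3)/4\notin \pi/2+\pi\mathbb{Z}$).
   Context: Network of $M=2$ populations of $N=2$ phase oscillators with phases $\theta_{\sigma,k}(t)\in\mathbb{R}$ (population $\sigma\in\{1,2\}$, oscillator $k\in\{1,2\}$), evolving by $$\dot\theta_{\sigma,k}=\omega+\frac{K_\mathrm{s}}{4}\sum_{j=1}^{2}\sin(\theta_{\sigma,j}-\theta_{\sigma,k}-\alpha_\mathrm{s})+\frac{K_\mathrm{n}}{4}\sum_{j=1}^{2}\sin(\theta_{\tau,j}-\theta_{\sigma,k}-\alpha_\mathrm{n}),$$ where $\tau$ denotes the population other than $\sigma$, $\omega\in\mathbb{R}$, $\alpha_\mathrm{s},\alpha_\mathrm{n}\in\mathbb{R}$ are phase lags, and the coupling strengths are parametrized by $A\in\mathbb{R}$ via $K_\mathrm{s}=(1+A)/2$, $K_\mathrm{n}=(1-A)/2$ (so $K_\mathrm{s}+K_\mathrm{n}=1$, $A=K_\mathrm{s}-K_\mathrm{n}$). The phase differences are $\psi_1=\theta_{1,1}-\theta_{1,2}$,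 $\psi_2=\theta_{1,2}-\theta_{2,1}$, $\psi_3=\theta_{2,1}-\theta_{2,2}$; they satisfy an autonomous ODE (the reduced system) since the right-hand side depends only on phase differences. *)

From Stdlib Require Import Reals.
From Coquelicot Require Import Coquelicot.
Open Scope R_scope.

(* Phases: th s k t = theta_{s,k}(t), population s in {1,2}, oscillator k in {1,2}. *)
Definition other_pop (s : nat) : nat := if Nat.eqb s 1 then 2%nat else 1%nat.

Definition Ks (A : R) : R := (1 + A) / 2.
Definition Kn (A : R) : R := (1 - A) / 2.

Definition osc_rhs (om A als aln : R) (th : nat -> nat -> R -> R)
  (s k : nat) (t : R) : R :=
  om
  + Ks A / 4 * (sin (th s 1%nat t - th s k t - als) + sin (th s 2%nat t - th s k t - als))
  + Kn A / 4 * (sin (th (other_pop s) 1%nat t - th s k t - aln)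
                + sin (th (other_pop s) 2%nat t - th s k t - aln)).

Definition is_solution (om A als aln : R) (th : nat -> nat -> R -> R) (a b : Rbar) : Prop :=
  forall (s k : nat) (t : R),
    (s = 1%nat \/ s = 2%nat) -> (k = 1%nat \/ k = 2%nat) ->
    Rbar_lt a t -> Rbar_lt t b ->
    is_derive (th s k) t (osc_rhs om A als aln th s k t).

Definition psi1 (th : nat -> nat -> R -> R) (t : R) : R := th 1%nat 1%nat t - th 1%nat 2%nat t.
Definition psi3 (th : nat -> nat -> R -> R) (t : R) : R := th 2%nat 1%nat t - th 2%nat 2%nat t.

Definition cot (x : R) : R := cos x / sin x.

Definition H_m1_0 (p1 p3 : R) : R := cot ((p1 + p3) / 4) * tan ((p1 - p3) / 4).

Definition H_defined (p1 p3 : R) : Prop :=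
  (forall n : Z, (p1 + p3) / 4 <> IZR n * PI) /\
  (forall n : Z, (p1 - p3) / 4 <> PI / 2 + IZR n * PI).

(* Write x, y for the phases of population 1 and z, w for those of population 2,
   and let delta = (z + w - x - y)/2 be the difference of the population means.
   With only inter-population coupling and no phase lag, sum-to-product formulas give
     psi1' = - cos delta * sin (psi1/2) * cos (psi3/2),
     psi3' = - cos delta * cos (psi1/2) * sin (psi3/2),
   so u = (psi1 + psi3)/4 and v = (psi1 - psi3)/4 satisfy
     u' = k sin u cos u  and  v' = k sin v cos v  with the same k = - cos delta / 2.
   Hence tan u and tan v have the same logarithmic derivative k, their ratio
   H = cot u * tan v has zero derivative, and the mean value theorem makes it constant. *)

From Stdlib Require Import Reals Lra.
From Coquelicot Require Import Coquelicot.
Open Scope R_scope.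

Lemma sin_sub_pair_diff (x y z w : R) :
  sin (z - x) + sin (w - x) - (sin (z - y) + sin (w - y)) =
  - 4 * cos ((z + w - x - y) / 2) * sin ((x - y) / 2) * cos ((z - w) / 2).
Proof.
  rewrite !form3.
  replace ((z - x - (w - x)) / 2) with ((z - w) / 2) by field.
  replace ((z - y - (w - y)) / 2) with ((z - w) / 2) by field.
  replace (2 * cos ((z - w) / 2) * sin ((z - x + (w - x)) / 2)
           - 2 * cos ((z - w) / 2) * sin ((z - y + (w - y)) / 2))
    with (2 * cos ((z - w) / 2) * (sin ((z - x + (w - x)) / 2) - sin ((z - y + (w - y)) / 2)))
    by ring.
  rewrite form4.
  replace (((z - x + (w - x)) / 2 + (z - y + (w - y)) / 2) / 2)
    with ((z + w - x - y) / 2) by field.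
  replace (((z - x + (w - x)) / 2 - (z - y + (w - y)) / 2) / 2)
    with (- ((x - y) / 2)) by field.
  rewrite sin_neg; ring.
Qed.

Lemma sin_cos_of_H_defined (p1 p3 : R) :
  H_defined p1 p3 -> sin ((p1 + p3) / 4) <> 0 /\ cos ((p1 - p3) / 4) <> 0.
Proof.
  intros [Hu Hv]; split.
  - intros E; destruct (sin_eq_0_0 _ E) as [n En]; exact (Hu n En).
  - intros E; destruct (cos_eq_0_0 _ E) as [n En]; apply (Hv n); rewrite En; ring.
Qed.

Lemma is_derive_cot_mul_tan (u v : R -> R) (t k : R) :
  sin (u t) <> 0 -> cos (v t) <> 0 ->
  is_derive u t (k * sin (u t) * cos (u t)) ->
  is_derive v t (k * sin (v t) * cos (v t)) ->
  is_derive (fun s => cot (u s) * tan (v s)) t 0.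
Proof.
  intros Hsu Hcv Du Dv.
  unfold cot, tan.
  auto_derive.
  - repeat split; try (eexists; eassumption); assumption.
  - replace (Derive (fun x : R => u x) t) with (k * sin (u t) * cos (u t))
      by (symmetry; apply is_derive_unique; exact Du).
    replace (Derive (fun x : R => v x) t) with (k * sin (v t) * cos (v t))
      by (symmetry; apply is_derive_unique; exact Dv).
    transitivity (k * cos (u t) * sin (v t) / (sin (u t) * cos (v t))
                  * ((sin (v t) ^ 2 + cos (v t) ^ 2) - (sin (u t) ^ 2 + cos (u t) ^ 2))).
    + field; split; assumption.
    + rewrite <- !Rsqr_pow2, !sin2_cos2; ring.
Qed.

Lemma is_derive_quarter_sum (f g : R -> R) (t c : R) :
  is_derive f t (c * sin (f t / 2) * cos (g t / 2)) ->
  is_derive g t (c * cos (f t / 2) * sin (g t / 2)) ->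
  is_derive (fun s => (f s + g s) / 4) t
    (c / 2 * sin ((f t + g t) / 4) * cos ((f t + g t) / 4)).
Proof.
  intros Df Dg.
  replace (c / 2 * _ * _)
    with (/ 4 * (c * sin (f t / 2) * cos (g t / 2) + c * cos (f t / 2) * sin (g t / 2))).
  - apply (is_derive_ext (fun s => / 4 * (f s + g s))).
    + intros s; simpl; unfold Rdiv; ring.
    + apply is_derive_scal, (is_derive_plus f g); assumption.
  - transitivity (c / 4 * sin (f t / 2 + g t / 2)).
    + rewrite sin_plus; field.
    + replace (f t / 2 + g t / 2) with (2 * ((f t + g t) / 4)) by field.
      rewrite sin_2a; field.
Qed.

(* The rate equations are invariant under [g |-> - g], which turns the difference
   [(f - g) / 4] into a sum. *)
Lemma is_derive_H_m1_0_of_rates (f g : R -> R) (t c : R) :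
  H_defined (f t) (g t) ->
  is_derive f t (c * sin (f t / 2) * cos (g t / 2)) ->
  is_derive g t (c * cos (f t / 2) * sin (g t / 2)) ->
  is_derive (fun s => H_m1_0 (f s) (g s)) t 0.
Proof.
  intros Hdef Df Dg.
  destruct (sin_cos_of_H_defined _ _ Hdef) as [Hsu Hcv].
  apply (is_derive_cot_mul_tan (fun s => (f s + g s) / 4) (fun s => (f s - g s) / 4) t (c / 2));
    auto.
  - exact (is_derive_quarter_sum f g t c Df Dg).
  - apply (is_derive_ext (fun s => (f s + - g s) / 4)); [reflexivity |].
    apply (is_derive_quarter_sum f (fun s => - g s) t c).
    + rewrite Rdiv_opp_l, cos_neg; exact Df.
    + rewrite Rdiv_opp_l, sin_neg.
      replace (c * cos (f t / 2) * - sin (g t / 2)) with (- (c * cos (f t / 2) * sin (g t / 2)))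
        by ring.
      apply (is_derive_opp g); exact Dg.
Qed.

Lemma eq_of_is_derive_0 (f : R -> R) (t1 t2 : R) :
  (forall t, Rmin t1 t2 <= t <= Rmax t1 t2 -> is_derive f t 0) -> f t1 = f t2.
Proof.
  intros Df.
  destruct (MVT_gen f t1 t2 (fun _ => 0)) as [c [_ Hc]].
  - intros t Ht; apply Df; lra.
  - intros t Ht; apply continuity_pt_filterlim, (ex_derive_continuous f).
    eexists; exact (Df t Ht).
  - lra.
Qed.

Lemma Rbar_lt_of_between (a b : Rbar) (t1 t2 t : R) :
  Rbar_lt a t1 -> Rbar_lt t1 b -> Rbar_lt a t2 -> Rbar_lt t2 b ->
  Rmin t1 t2 <= t <= Rmax t1 t2 -> Rbar_lt a t /\ Rbar_lt t b.
Proof.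
  intros Ha1 Hb1 Ha2 Hb2 [Hmin Hmax]; split.
  - apply Rbar_lt_le_trans with (Rmin t1 t2); [apply Rmin_case | exact Hmin]; assumption.
  - apply Rbar_le_lt_trans with (Rmax t1 t2); [exact Hmax | apply Rmax_case]; assumption.
Qed.

Section InterPopulationCoupling.

Variables (om : R) (th : nat -> nat -> R -> R) (a b : Rbar).
Hypothesis sol : is_solution om (-1) 0 0 th a b.

Let mean_diff (t : R) : R :=
  (th 2 1 t + th 2 2 t - th 1 1 t - th 1 2 t) / 2.

Lemma is_derive_psi1 (t : R) : Rbar_lt a t -> Rbar_lt t b ->
  is_derive (psi1 th) t
    (- cos (mean_diff t) * sin (psi1 th t / 2) * cos (psi3 th t / 2)).
Proof.
  intros Ha Hb.
  replace (- _ * _ * _)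
    with (osc_rhs om (-1) 0 0 th 1 1 t - osc_rhs om (-1) 0 0 th 1 2 t).
  - apply (is_derive_minus (th 1 1) (th 1 2)); apply sol; auto.
  - pose proof (sin_sub_pair_diff (th 1 1 t) (th 1 2 t) (th 2 1 t) (th 2 2 t)).
    unfold osc_rhs, Ks, Kn, other_pop, psi1, psi3, mean_diff; simpl.
    rewrite !Rminus_0_r; lra.
Qed.

Lemma is_derive_psi3 (t : R) : Rbar_lt a t -> Rbar_lt t b ->
  is_derive (psi3 th) t
    (- cos (mean_diff t) * cos (psi1 th t / 2) * sin (psi3 th t / 2)).
Proof.
  intros Ha Hb.
  replace (- _ * _ * _)
    with (osc_rhs om (-1) 0 0 th 2 1 t - osc_rhs om (-1) 0 0 th 2 2 t).
  - apply (is_derive_minus (th 2 1) (th 2 2)); apply sol; auto.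
  - pose proof (sin_sub_pair_diff (th 2 1 t) (th 2 2 t) (th 1 1 t) (th 1 2 t)).
    unfold osc_rhs, Ks, Kn, other_pop, psi1, psi3, mean_diff; simpl.
    replace ((th 2 1 t + th 2 2 t - th 1 1 t - th 1 2 t) / 2)
      with (- ((th 1 1 t + th 1 2 t - th 2 1 t - th 2 2 t) / 2)) by field.
    rewrite cos_neg, !Rminus_0_r; lra.
Qed.

Lemma is_derive_H_m1_0 (t : R) : Rbar_lt a t -> Rbar_lt t b ->
  H_defined (psi1 th t) (psi3 th t) ->
  is_derive (fun s => H_m1_0 (psi1 th s) (psi3 th s)) t 0.
Proof.
  intros Ha Hb Hdef.
  apply (is_derive_H_m1_0_of_rates (psi1 th) (psi3 th) t (- cos (mean_diff t))).
  - exact Hdef.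
  - exact (is_derive_psi1 t Ha Hb).
  - exact (is_derive_psi3 t Ha Hb).
Qed.

End InterPopulationCoupling.

Theorem mainTheorem3 :
  forall (om : R) (th : nat -> nat -> R -> R) (a b : Rbar),
    is_solution om (-1) 0 0 th a b ->
    forall t1 t2 : R,
      Rbar_lt a t1 -> Rbar_lt t1 b -> Rbar_lt a t2 -> Rbar_lt t2 b ->
      (forall t : R, Rmin t1 t2 <= t <= Rmax t1 t2 ->
         H_defined (psi1 th t) (psi3 th t)) ->
      H_m1_0 (psi1 th t1) (psi3 th t1) = H_m1_0 (psi1 th t2) (psi3 th t2).
Proof.
  intros om th a b sol t1 t2 Ha1 Hb1 Ha2 Hb2 Hdef.
  apply (eq_of_is_derive_0 (fun s => H_m1_0 (psi1 th s) (psi3 th s))).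
  intros t Ht.
  destruct (Rbar_lt_of_between a b t1 t2 t) as [Ha Hb]; auto.
  apply (is_derive_H_m1_0 om th a b sol); auto.
Qed.
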